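(* Let $\boldsymbol{\mathcal{D}} = \begin{pmatrix}\boldsymbol{W}_p\\ \boldsymbol{U}_f \\ \boldsymbol{Y}_f\end{pmatrix}\in\mathbb{R}^{L(m+p)\times \ell}$ be a data matrix with full row rank, with LQ decomposition $\boldsymbol{\mathcal{D}} = \begin{pmatrix} \boldsymbol{L}_{11} & \boldsymbol{0} & \boldsymbol{0} & \boldsymbol{0} \\ \boldsymbol{L}_{21} & \boldsymbol{L}_{22} & \boldsymbol{0} & \boldsymbol{0} \\ \boldsymbol{L}_{31} & \boldsymbol{L}_{32} & \boldsymbol{L}_{33} & \boldsymbol{0} \end{pmatrix}\begin{pmatrix}\boldsymbol{Q}_1\\ \boldsymbol{Q}_2\\ \boldsymbol{Q}_3\\ \boldsymbol{Q}_4\end{pmatrix}$ as described in the context, and let $\lambda_a>0$. Then DeePC with regularization $h(\boldsymbol{a}) = \lambda_a \|\boldsymbol{a}\|_2^2$ is equivalent to $\boldsymbol{\gamma}$-DDPC with regularization $\tilde h(\boldsymbol{\gamma}) = \lambda_a \|\boldsymbol{\gamma}_2\|_2^2 + \lambda_a \|\boldsymbol{\gamma}_3\|_2^2$.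
   Context: Data: $m$ inputs, $p$ outputs, past horizon $N_p$, future horizon $N_f$, $L=N_p+N_f$, and $\ell$ data trajectories. The data matrix is partitioned as $\boldsymbol{\mathcal{D}} = \begin{pmatrix}\boldsymbol{W}_p\\ \boldsymbol{U}_f \\ \boldsymbol{Y}_f\end{pmatrix}$ with $\boldsymbol{W}_p\in\mathbb{R}^{N_p(m+p)\times\ell}$ (past inputs and outputs), $\boldsymbol{U}_f\in\mathbb{R}^{mN_f\times \ell}$, $\boldsymbol{Y}_f\in\mathbb{R}^{pN_f\times\ell}$; it is assumed to have full row rank. The LQ decomposition has lower block-triangular factor with non-singular square diagonal blocks $\boldsymbol{L}_{11},\boldsymbol{L}_{22},\boldsymbol{L}_{33}$ and $\boldsymbol{Q}=\begin{pmatrix}\boldsymbol{Q}_1^\top & \boldsymbol{Q}_2^\top&\boldsymbol{Q}_3^\top&\boldsymbol{Q}_4^\top\end{pmatrix}^\top\in\mathbb{R}^{\ell\times\ell}$ orthogonal (so $\boldsymbol{Q}_i\boldsymbol{Q}_i^\top=\boldsymbol{I}$, $\boldsymbol{Q}_i\boldsymbol{Q}_j^\top=\boldsymbol{0}$ for $i\neq j$); $\boldsymbol{\gamma}_i := \boldsymbol{Q}_i\boldsymbol{a}$. Given current past I/O data $\boldsymbol{\xi}\in\mathbb{R}^{N_p(m+p)}$, a cost $J(\boldsymbol{\xi},\mathbf{u}_f,\mathbf{y}_f)$ and constraint sets $\mathcal{U}\subseteq\mathbb{R}^{mN_f}$, $\mathcal{Y}\subseteq\mathbb{R}^{pN_f}$: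 DeePC with regularization $h$ is the problem $\min_{\mathbf{u}_f,\mathbf{y}_f,\boldsymbol{a}} J(\boldsymbol{\xi},\mathbf{u}_f,\mathbf{y}_f)+h(\boldsymbol{a})$ s.t. $(\boldsymbol{\xi};\mathbf{u}_f;\mathbf{y}_f)=\boldsymbol{\mathcal{D}}\boldsymbol{a}$, $(\mathbf{u}_f,\mathbf{y}_f)\in\mathcal{U}\times\mathcal{Y}$. $\boldsymbol{\gamma}$-DDPC with regularization $\tilde h$ is the problem $\min_{\mathbf{u}_f,\mathbf{y}_f,\boldsymbol{\gamma}_2,\boldsymbol{\gamma}_3} J(\boldsymbol{\xi},\mathbf{u}_f,\mathbf{y}_f)+\tilde h(\boldsymbol{\gamma})$ s.t. $\boldsymbol{\gamma}_1=\boldsymbol{L}_{11}^{-1}\boldsymbol{\xi}$, $\mathbf{u}_f = \boldsymbol{L}_{21}\boldsymbol{\gamma}_1+\boldsymbol{L}_{22}\boldsymbol{\gamma}_2$, $\mathbf{y}_f=\boldsymbol{L}_{31}\boldsymbol{\gamma}_1+\boldsymbol{L}_{32}\boldsymbol{\gamma}_2+\boldsymbol{L}_{33}\boldsymbol{\gamma}_3$, $(\mathbf{u}_f,\mathbf{y}_f)\in\mathcal{U}\times\mathcal{Y}$ (i.e., $\boldsymbol{\gamma}_4=\boldsymbol{0}$ is fixed). Two such optimal control problems are called equivalent if, for every $\boldsymbol{\xi}$, they yield the same optimal predicted input/output trajectories $(\mathbf{u}_f^\ast,\mathbf{y}_f^\ast)$ (not necessarily the same optimal cost). *)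

From HB Require Import structures.
From mathcomp Require Import all_boot all_order all_algebra.
Set Implicit Arguments. Unset Strict Implicit. Unset Printing Implicit Defensive.
Import Order.TTheory GRing.Theory Num.Theory.
Local Open Scope ring_scope.

Section DDPC.
Variable R : realFieldType.

Definition sqnorm n (v : 'cV[R]_n) : R := \sum_(i < n) (v i 0) ^+ 2.

(* Block dimensions:
   n1 = N_p (m+p) (past I/O), n2 = m N_f (future inputs),
   n3 = p N_f (future outputs), n4 = l - (n1+n2+n3);
   the number of data trajectories is l = n1 + (n2 + (n3 + n4)). *)
Variables n1 n2 n3 n4 : nat.
Notation l := (n1 + (n2 + (n3 + n4)))%N.

Definition Qstack (Q1 : 'M[R]_(n1, l)) (Q2 : 'M[R]_(n2, l))
  (Q3 : 'M[R]_(n3, l)) (Q4 : 'M[R]_(n4, l)) : 'M[R]_l :=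
  col_mx Q1 (col_mx Q2 (col_mx Q3 Q4)).

Definition Dmat (Wp : 'M[R]_(n1, l)) (Uf : 'M[R]_(n2, l)) (Yf : 'M[R]_(n3, l))
  : 'M[R]_(n1 + (n2 + n3), l) := col_mx Wp (col_mx Uf Yf).

Definition Lmat (L11 : 'M[R]_n1) (L21 : 'M[R]_(n2, n1)) (L22 : 'M[R]_n2)
  (L31 : 'M[R]_(n3, n1)) (L32 : 'M[R]_(n3, n2)) (L33 : 'M[R]_n3)
  : 'M[R]_(n1 + (n2 + n3), l) :=
  col_mx (row_mx L11 (0 : 'M[R]_(n1, n2 + (n3 + n4))))
    (col_mx (row_mx L21 (row_mx L22 (0 : 'M[R]_(n2, n3 + n4))))
            (row_mx L31 (row_mx L32 (row_mx L33 (0 : 'M[R]_(n3, n4)))))).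

Variables (J : 'cV[R]_n1 -> 'cV[R]_n2 -> 'cV[R]_n3 -> R)
          (Uset : 'cV[R]_n2 -> Prop) (Yset : 'cV[R]_n3 -> Prop)
          (lam : R).

Definition deepc_feas (D : 'M[R]_(n1 + (n2 + n3), l)) (xi : 'cV[R]_n1)
  (u : 'cV[R]_n2) (y : 'cV[R]_n3) (a : 'cV[R]_l) : Prop :=
  col_mx xi (col_mx u y) = D *m a /\ Uset u /\ Yset y.

Definition deepc_cost (xi : 'cV[R]_n1) (u : 'cV[R]_n2) (y : 'cV[R]_n3)
  (a : 'cV[R]_l) : R := J xi u y + lam * sqnorm a.

Definition deepc_opt_traj D xi u y : Prop :=
  exists a, deepc_feas D xi u y a /\
    forall u' y' a', deepc_feas D xi u' y' a' ->
      deepc_cost xi u y a <= deepc_cost xi u' y' a'.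

Definition gddpc_feas (L11 : 'M[R]_n1) (L21 : 'M[R]_(n2, n1)) (L22 : 'M[R]_n2)
  (L31 : 'M[R]_(n3, n1)) (L32 : 'M[R]_(n3, n2)) (L33 : 'M[R]_n3)
  (xi : 'cV[R]_n1) (u : 'cV[R]_n2) (y : 'cV[R]_n3)
  (g2 : 'cV[R]_n2) (g3 : 'cV[R]_n3) : Prop :=
  let g1 := invmx L11 *m xi in
  u = L21 *m g1 + L22 *m g2 /\
  y = L31 *m g1 + L32 *m g2 + L33 *m g3 /\
  Uset u /\ Yset y.

Definition gddpc_cost (xi : 'cV[R]_n1) (u : 'cV[R]_n2) (y : 'cV[R]_n3)
  (g2 : 'cV[R]_n2) (g3 : 'cV[R]_n3) : R :=
  J xi u y + (lam * sqnorm g2 + lam * sqnorm g3).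

Definition gddpc_opt_traj L11 L21 L22 L31 L32 L33 xi u y : Prop :=
  exists g2 g3, gddpc_feas L11 L21 L22 L31 L32 L33 xi u y g2 g3 /\
    forall u' y' g2' g3', gddpc_feas L11 L21 L22 L31 L32 L33 xi u' y' g2' g3' ->
      gddpc_cost xi u y g2 g3 <= gddpc_cost xi u' y' g2' g3'.

End DDPC.

(* Put gamma := Q a.  As Q is orthogonal, ||a||^2 = sum_i ||gamma_i||^2, and
   the DeePC constraint D a = (xi; u; y) reads gamma_1 = L11^-1 xi together with
   the gamma-DDPC equations for (u, y), while gamma_4 is unconstrained.  Hence
   the DeePC cost is the gamma-DDPC cost plus the constant lam ||L11^-1 xi||^2
   plus lam ||gamma_4||^2 >= 0, which vanishes for gamma_4 = 0: the two problems
   have the same optimal trajectories. *)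

From HB Require Import structures.
From mathcomp Require Import all_boot all_order all_algebra.
From mathcomp Require Import ring lra.
Set Implicit Arguments. Unset Strict Implicit. Unset Printing Implicit Defensive.
Import Order.TTheory GRing.Theory Num.Theory.
Local Open Scope ring_scope.

Section SquaredNorm.
Variable R : realFieldType.

Lemma sqnorm_ge0 n (v : 'cV[R]_n) : 0 <= sqnorm v.
Proof. by apply: sumr_ge0 => i _; rewrite sqr_ge0. Qed.

Lemma sqnorm0 n : sqnorm (0 : 'cV[R]_n) = 0.
Proof. by rewrite /sqnorm big1 // => i _; rewrite mxE expr0n. Qed.

Lemma sqnorm_col_mx n k (v : 'cV[R]_n) (w : 'cV[R]_k) :
  sqnorm (col_mx v w) = sqnorm v + sqnorm w.
Proof.
by rewrite /sqnorm big_split_ord; congr (_ + _); apply: eq_bigr => i _;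
  rewrite ?col_mxEu ?col_mxEd.
Qed.

Lemma sqnormE n (v : 'cV[R]_n) : sqnorm v = (v^T *m v) 0 0.
Proof. by rewrite /sqnorm mxE; apply: eq_bigr => i _; rewrite mxE expr2. Qed.

Lemma sqnorm_mul_orthomx n (Q : 'M[R]_n) (v : 'cV[R]_n) :
  Q^T *m Q = 1%:M -> sqnorm (Q *m v) = sqnorm v.
Proof. by move=> QtQ; rewrite !sqnormE trmx_mul -mulmxA (mulmxA Q^T) QtQ mul1mx. Qed.

End SquaredNorm.

Section DeePCgammaDDPC.
Variables (R : realFieldType) (n1 n2 n3 n4 : nat).
Notation l := (n1 + (n2 + (n3 + n4)))%N.

Lemma Lmat_mul_col_mx (L11 : 'M[R]_n1) (L21 : 'M[R]_(n2, n1)) (L22 : 'M[R]_n2)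
    (L31 : 'M[R]_(n3, n1)) (L32 : 'M[R]_(n3, n2)) (L33 : 'M[R]_n3)
    (g1 : 'cV_n1) (g2 : 'cV_n2) (g3 : 'cV_n3) (g4 : 'cV_n4) :
  Lmat n4 L11 L21 L22 L31 L32 L33 *m col_mx g1 (col_mx g2 (col_mx g3 g4)) =
  col_mx (L11 *m g1)
    (col_mx (L21 *m g1 + L22 *m g2) (L31 *m g1 + L32 *m g2 + L33 *m g3)).
Proof. by rewrite /Lmat !mul_col_mx !mul_row_col !mul0mx !addr0 !addrA. Qed.

Variables (D : 'M[R]_(n1 + (n2 + n3), l)) (Q : 'M[R]_l).
Variables (L11 : 'M[R]_n1) (L21 : 'M[R]_(n2, n1)) (L22 : 'M[R]_n2)
  (L31 : 'M[R]_(n3, n1)) (L32 : 'M[R]_(n3, n2)) (L33 : 'M[R]_n3).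
Hypothesis D_LQ : D = Lmat n4 L11 L21 L22 L31 L32 L33 *m Q.
Hypothesis L11_unit : L11 \in unitmx.
Hypothesis Q_orth_r : Q *m Q^T = 1%:M.
Hypothesis Q_orth_l : Q^T *m Q = 1%:M.

Variables (J : 'cV[R]_n1 -> 'cV[R]_n2 -> 'cV[R]_n3 -> R)
  (Uset : 'cV[R]_n2 -> Prop) (Yset : 'cV[R]_n3 -> Prop) (lam : R).
Variable xi : 'cV[R]_n1.

Notation g1 := (invmx L11 *m xi).
Notation deepc_feas := (deepc_feas Uset Yset D xi).
Notation deepc_cost := (deepc_cost J lam xi).
Notation gddpc_feas := (gddpc_feas Uset Yset L11 L21 L22 L31 L32 L33 xi).
Notation gddpc_cost := (gddpc_cost J lam xi).

Definition gamma2 (a : 'cV[R]_l) : 'cV[R]_n2 := usubmx (dsubmx (Q *m a)).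
Definition gamma3 (a : 'cV[R]_l) : 'cV[R]_n3 := usubmx (dsubmx (dsubmx (Q *m a))).
Definition gamma4 (a : 'cV[R]_l) : 'cV[R]_n4 := dsubmx (dsubmx (dsubmx (Q *m a))).

Definition deepc_of_gamma (g2 : 'cV[R]_n2) (g3 : 'cV[R]_n3) : 'cV[R]_l :=
  Q^T *m col_mx g1 (col_mx g2 (col_mx g3 0)).

Lemma deepc_feas_gamma u y a :
  deepc_feas u y a ->
  gddpc_feas u y (gamma2 a) (gamma3 a) /\
  sqnorm a = sqnorm g1 + (sqnorm (gamma2 a) + (sqnorm (gamma3 a) + sqnorm (gamma4 a))).
Proof.
move=> [Da [Uu Yy]].
have QaE : Q *m a = col_mx (usubmx (Q *m a))
    (col_mx (gamma2 a) (col_mx (gamma3 a) (gamma4 a))) by rewrite !vsubmxK.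
rewrite D_LQ -mulmxA QaE Lmat_mul_col_mx in Da.
case/eq_col_mx: Da => xiE /eq_col_mx[uE yE].
have g1E : usubmx (Q *m a) = g1 by rewrite xiE mulKmx.
rewrite g1E in uE yE; split=> //.
by rewrite -(sqnorm_mul_orthomx a Q_orth_l) QaE !sqnorm_col_mx g1E.
Qed.

Lemma gddpc_feas_deepc u y g2 g3 :
  gddpc_feas u y g2 g3 -> deepc_feas u y (deepc_of_gamma g2 g3).
Proof.
move=> [uE [yE [Uu Yy]]]; split=> //.
by rewrite D_LQ -mulmxA (mulmxA Q) Q_orth_r mul1mx Lmat_mul_col_mx mulKVmx // uE yE.
Qed.

Lemma sqnorm_deepc_of_gamma g2 g3 :
  sqnorm (deepc_of_gamma g2 g3) = sqnorm g1 + (sqnorm g2 + sqnorm g3).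
Proof.
by rewrite sqnorm_mul_orthomx ?trmxK // !sqnorm_col_mx sqnorm0 addr0.
Qed.

Lemma deepc_cost_gamma u y a :
  deepc_feas u y a ->
  deepc_cost u y a =
  gddpc_cost u y (gamma2 a) (gamma3 a) + lam * sqnorm g1 + lam * sqnorm (gamma4 a).
Proof.
case/deepc_feas_gamma=> _ aE; rewrite /deepc_cost /gddpc_cost aE; ring.
Qed.

Lemma deepc_cost_of_gamma u y g2 g3 :
  deepc_cost u y (deepc_of_gamma g2 g3) = gddpc_cost u y g2 g3 + lam * sqnorm g1.
Proof. by rewrite /deepc_cost /gddpc_cost sqnorm_deepc_of_gamma; ring. Qed.

Hypothesis lam_ge0 : 0 <= lam.

Lemma deepc_gddpc_opt_traj u y :
  deepc_opt_traj J Uset Yset lam D xi u y <->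
  gddpc_opt_traj J Uset Yset lam L11 L21 L22 L31 L32 L33 xi u y.
Proof.
have gamma4_cost a : 0 <= lam * sqnorm (gamma4 a) by rewrite mulr_ge0 ?sqnorm_ge0.
split.
- move=> [a [feas_a opt_a]].
  have [gfeas_a _] := deepc_feas_gamma feas_a.
  exists (gamma2 a), (gamma3 a); split=> // u' y' g2 g3 /gddpc_feas_deepc/opt_a.
  rewrite (deepc_cost_gamma feas_a) deepc_cost_of_gamma.
  by have := gamma4_cost a; lra.
- move=> [g2 [g3 [gfeas opt_g]]].
  exists (deepc_of_gamma g2 g3); split; first exact: gddpc_feas_deepc gfeas.
  move=> u' y' a feas_a; have [/opt_g gopt _] := deepc_feas_gamma feas_a.
  rewrite (deepc_cost_gamma feas_a) deepc_cost_of_gamma.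
  by have := gamma4_cost a; lra.
Qed.

End DeePCgammaDDPC.

Theorem proposition3 (R : realFieldType) (m p Np Nf n4 : nat)
  (Wp : 'M[R]_(Np * (m + p), Np * (m + p) + (m * Nf + (p * Nf + n4))))
  (Uf : 'M[R]_(m * Nf, Np * (m + p) + (m * Nf + (p * Nf + n4))))
  (Yf : 'M[R]_(p * Nf, Np * (m + p) + (m * Nf + (p * Nf + n4))))
  (L11 : 'M[R]_(Np * (m + p))) (L21 : 'M[R]_(m * Nf, Np * (m + p)))
  (L22 : 'M[R]_(m * Nf)) (L31 : 'M[R]_(p * Nf, Np * (m + p)))
  (L32 : 'M[R]_(p * Nf, m * Nf)) (L33 : 'M[R]_(p * Nf))
  (Q1 : 'M[R]_(Np * (m + p), Np * (m + p) + (m * Nf + (p * Nf + n4))))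
  (Q2 : 'M[R]_(m * Nf, Np * (m + p) + (m * Nf + (p * Nf + n4))))
  (Q3 : 'M[R]_(p * Nf, Np * (m + p) + (m * Nf + (p * Nf + n4))))
  (Q4 : 'M[R]_(n4, Np * (m + p) + (m * Nf + (p * Nf + n4))))
  (J : 'cV[R]_(Np * (m + p)) -> 'cV[R]_(m * Nf) -> 'cV[R]_(p * Nf) -> R)
  (Uset : 'cV[R]_(m * Nf) -> Prop) (Yset : 'cV[R]_(p * Nf) -> Prop)
  (lam : R) :
  \rank (Dmat Wp Uf Yf) = (Np * (m + p) + (m * Nf + p * Nf))%N ->
  Dmat Wp Uf Yf = Lmat n4 L11 L21 L22 L31 L32 L33 *m Qstack Q1 Q2 Q3 Q4 ->
  L11 \in unitmx -> L22 \in unitmx -> L33 \in unitmx ->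
  Qstack Q1 Q2 Q3 Q4 *m (Qstack Q1 Q2 Q3 Q4)^T = 1%:M ->
  (Qstack Q1 Q2 Q3 Q4)^T *m Qstack Q1 Q2 Q3 Q4 = 1%:M ->
  0 < lam ->
  forall (xi : 'cV[R]_(Np * (m + p))) (u : 'cV[R]_(m * Nf)) (y : 'cV[R]_(p * Nf)),
    deepc_opt_traj J Uset Yset lam (Dmat Wp Uf Yf) xi u y <->
    gddpc_opt_traj J Uset Yset lam L11 L21 L22 L31 L32 L33 xi u y.
Proof.
move=> _ D_LQ L11_unit _ _ Q_orth_r Q_orth_l lam_gt0 xi u y.
exact (deepc_gddpc_opt_traj D_LQ L11_unit Q_orth_r Q_orth_l J Uset Yset xi (ltW lam_gt0) u y).
Qed.
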